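(* Let $P$ and $Q$ be probability distributions on a countable password space $\mathcal{PW}$ (discrete case) such that $Q(pw)>0$ whenever $P(pw)>0$, and let $k\ge 2$. Define $G(x)=\Pr_{pw\gets Q}\!\left[\frac{P(pw)}{Q(pw)}\le x\right]$ and $G(x^-)=\Pr_{pw\gets Q}\!\left[\frac{P(pw)}{Q(pw)}< x\right]$. Then the flatness satisfies $$\epsilon(1)=\sum_{x}\frac{1}{k}\,x\left[G^{k}(x)-G^{k}(x^-)\right],$$ where the sum ranges over the values $x$ taken by $P(pw)/Q(pw)$ for $pw$ with $Q(pw)>0$.
   Context: The flatness game $FlatGame^{P,Q,k}_{\mathcal{A}}(n)$: sample a password $pw\gets P$ and $k-1$ honeywords independently from $Q$; form the list of these $k$ words and shuffle it uniformly at random. The attacker $\mathcal{A}$ (any probabilistic Turing machine, which may know $P$ and $Q$) receives the shuffled list and outputs $n$ guesses (positions in the list); it wins if the position holding $pw$ is among its guesses. $\epsilon(1)=\max_{\mathcal{A}}\Pr[FlatGame^{P,Q,k}_{\mathcal{A}}(1)=1]$ is the flatness. *)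

From HB Require Import structures.
From mathcomp Require Import all_boot all_order all_algebra all_fingroup.
From mathcomp Require Import all_classical all_reals.
From mathcomp Require Import ereal esum.
Unset Printing Implicit Defensive.
Import Order.TTheory GRing.Theory Num.Theory.
Local Open Scope classical_set_scope.
Local Open Scope ring_scope.

Section Flat.
Variables (R : realType) (T : countType).

Definition is_distr (D : T -> R) : Prop :=
  (forall x, 0 <= D x) /\ (\esum_(x in [set: T]) (D x)%:E = 1%E).

(* A probabilistic attacker: given the shuffled list w of k words, it outputs
   position i with probability A w i. *)
Definition is_attacker (k : nat) (A : {ffun 'I_k -> T} -> 'I_k -> R) : Prop :=
  forall w, (forall i, 0 <= A w i) /\ \sum_(i < k) A w i = 1.

(* Pre-shuffle list t: position j with val j = 0 holds pw ~ P, the other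
   k-1 positions hold independent honeywords ~ Q.  A uniform permutation s
   is applied: the shuffled list is w with w (s j) = t j, and pw ends up at
   position s j0 (val j0 = 0).  game_prob w i = Pr[shuffled list = w and pw is
   at position i]. *)
Definition game_prob (P Q : T -> R) (k : nat) (w : {ffun 'I_k -> T}) (i : 'I_k)
  : R :=
  \sum_(s : 'S_k) (k`!%:R)^-1 * (nat_of_ord ((s^-1)%g i) == 0)%:R *
     \prod_(j < k) (if nat_of_ord j == 0 then P (w (s j)) else Q (w (s j))).

Definition win_prob (P Q : T -> R) (k : nat)
  (A : {ffun 'I_k -> T} -> 'I_k -> R) : \bar R :=
  \esum_(w in [set: {ffun 'I_k -> T}])
     (\sum_(i < k) A w i * game_prob P Q k w i)%:E.

Definition is_flatness (P Q : T -> R) (k : nat) (e : \bar R) : Prop :=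
  (exists A, is_attacker k A /\ win_prob P Q k A = e) /\
  (forall A, is_attacker k A -> (win_prob P Q k A <= e)%E).

Definition Gle (P Q : T -> R) (x : R) : R :=
  fine (\esum_(pw in [set pw | P pw / Q pw <= x]) (Q pw)%:E).
Definition Glt (P Q : T -> R) (x : R) : R :=
  fine (\esum_(pw in [set pw | P pw / Q pw < x]) (Q pw)%:E).

Definition ratio_values (P Q : T -> R) : set R :=
  [set x | exists pw, 0 < Q pw /\ x = P pw / Q pw].

Definition flatness_formula (P Q : T -> R) (k : nat) : \bar R :=
  \esum_(x in ratio_values P Q)
     ((k%:R)^-1 * x * (Gle P Q x ^+ k - Glt P Q x ^+ k))%:E.

End Flat.
Arguments is_distr {R T}.
Arguments is_attacker {R T}.
Arguments game_prob {R T}.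
Arguments win_prob {R T}.
Arguments is_flatness {R T}.
Arguments Gle {R T}.
Arguments Glt {R T}.
Arguments ratio_values {R T}.
Arguments flatness_formula {R T}.

(* Given the shuffled list [w], the probability that the password sits at position
   [i] is [1/k * P(w i)/Q(w i) * prod_j Q(w j)].  Hence the best attacker guesses a
   position of maximal likelihood ratio [P/Q], and its winning probability is
   [1/k * E[max_i P(w i)/Q(w i)]] for [w ~ Q^k].  The maximum of [k] independent
   ratios is [<= x] (resp. [< x]) exactly when all of them are, with probability
   [G(x)^k] (resp. [G(x^-)^k]); so it equals [x] with probability
   [G(x)^k - G(x^-)^k]. *)

From HB Require Import structures.
From mathcomp Require Import all_boot all_order all_algebra all_fingroup.
From mathcomp Require Import all_classical all_reals.
From mathcomp Require Import ereal esum.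
Import Order.TTheory GRing.Theory Num.Theory.
Local Open Scope classical_set_scope.
Local Open Scope ring_scope.

Section esum_lemmas.
Variable R : realType.

Lemma ge0_esumZl (I : choiceType) (S : set I) (a : I -> \bar R) (c : R) :
  (forall i, (0 <= a i)%E) -> 0 <= c ->
  \esum_(i in S) (c%:E * a i)%E = (c%:E * \esum_(i in S) a i)%E.
Proof.
move=> a0 c0; rewrite /esum -ereal_supZl //; last first.
  by apply/set0P; exists 0%E, set0; [exact: fsets_set0|rewrite fsbig_set0].
congr ereal_sup; apply/seteqP; split=> x /=.
  by move=> [X XS <-]; exists (\sum_(i \in X) a i)%E; [exists X|rewrite ge0_mule_fsumr].
by move=> [_ [X XS <-] <-]; exists X => //; rewrite ge0_mule_fsumr.
Qed.

Lemma esum_fin_num_subset (I : choiceType) (S : set I) (a : I -> \bar R) :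
  (forall i, (0 <= a i)%E) -> \esum_(i in [set: I]) a i \is a fin_num ->
  \esum_(i in S) a i \is a fin_num.
Proof.
move=> a0 finT; rewrite ge0_fin_numE ?esum_ge0 //.
apply: le_lt_trans (_ : _ <= \esum_(i in [set: I]) a i)%E _; last first.
  by rewrite -ge0_fin_numE ?esum_ge0.
by rewrite esum_mkcond; apply: le_esum => i _; case: ifP.
Qed.

Lemma esum_fibers (I J : choiceType) (D : set J) (f : I -> J) (a : I -> \bar R) :
  (forall i, (0 <= a i)%E) ->
  \esum_(i in f @^-1` D) a i = \esum_(x in D) \esum_(i in f @^-1` [set x]) a i.
Proof.
move=> a0; rewrite esum_esum //.
rewrite (reindex_esum (D `*`` (fun x => f @^-1` [set x])) _ snd) //.
split=> [[x i] /= [Dx fiE]|[x i] [y j]|i Di].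
- by rewrite /preimage /= fiE.
- by rewrite !inE => -[_ /= <-] [_ /= <-] /= ->.
- by exists (f i, i).
Qed.

End esum_lemmas.

Definition ffun_cons {T : Type} {n : nat} (p : T * {ffun 'I_n -> T}) :
  {ffun 'I_n.+1 -> T} :=
  [ffun i => if unlift ord0 i is Some j then p.2 j else p.1].

Lemma ffun_cons0 (T : Type) n (p : T * {ffun 'I_n -> T}) : ffun_cons p ord0 = p.1.
Proof. by rewrite ffunE unlift_none. Qed.

Lemma ffun_consS (T : Type) n (p : T * {ffun 'I_n -> T}) j :
  ffun_cons p (lift ord0 j) = p.2 j.
Proof. by rewrite ffunE liftK. Qed.

Lemma ffun_cons_bij {T : Type} (n : nat) (S : set T) :
  set_bij (S `*` [set w : {ffun 'I_n -> T} | forall i, S (w i)])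
          [set w : {ffun 'I_n.+1 -> T} | forall i, S (w i)] ffun_cons.
Proof.
split.
- move=> [t w] [/= St Sw] i; case: (unliftP ord0 i) => [j ->|->].
    by rewrite ffun_consS.
  by rewrite ffun_cons0.
- move=> [t w] [t' w'] _ _ /= /ffunP e.
  congr pair; first by have := e ord0; rewrite !ffun_cons0.
  by apply/ffunP => j; have := e (lift ord0 j); rewrite !ffun_consS.
- move=> w /= Sw; exists (w ord0, [ffun j => w (lift ord0 j)]).
    by split => //= j; rewrite ffunE.
  apply/ffunP => i; rewrite ffunE; case: (unliftP ord0 i) => [j ->|->] //=.
  by rewrite ffunE.
Qed.

Lemma esum_prod_ffun (R : realType) (T : choiceType) (S : set T) (a : T -> R)
    (n : nat) :
  (forall t, 0 <= a t) -> \esum_(t in S) (a t)%:E \is a fin_num ->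
  \esum_(w in [set w : {ffun 'I_n -> T} | forall i, S (w i)])
    (\prod_(i < n) a (w i))%:E = ((\esum_(t in S) (a t)%:E) ^+ n)%E.
Proof.
move=> a0 fin; elim: n => [|n IH].
  have -> : [set w : {ffun 'I_0 -> T} | forall i, S (w i)] = [set ffun0 (card_ord 0)].
    apply/seteqP; split=> w /= _; last by case.
    by apply/ffunP => -[].
  by rewrite esum_set1 ?big_ord0.
rewrite (reindex_esum _ _ _ _ (ffun_cons_bij n S)).
transitivity (\esum_(t in S) \esum_(w in [set w : {ffun 'I_n -> T} | forall i, S (w i)])
    (\prod_(i < n.+1) a (ffun_cons (t, w) i))%:E)%E.
  rewrite esum_esum; last by move=> t w _ _; rewrite lee_fin prodr_ge0.
  by apply: eq_esum => -[t w].
under eq_esum => t _.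
  under eq_esum => w _ do rewrite big_ord_recl ffun_cons0 /= EFinM.
  rewrite ge0_esumZl //; last by move=> w; rewrite lee_fin prodr_ge0.
  under eq_esum => w _ do under eq_bigr => i _ do rewrite ffun_consS /=.
  rewrite IH; over.
have c_ge0 : 0 <= fine ((\esum_(t in S) (a t)%:E) ^+ n)%E.
  by rewrite fine_ge0 // expe_ge0 // esum_ge0 // => t _; rewrite lee_fin.
rewrite expeS -(fineK (fin_numX n fin)).
under eq_esum do rewrite muleC.
by rewrite ge0_esumZl // muleC.
Qed.

Lemma count_perm_ord0_eq n (i : 'I_n.+1) :
  (\sum_(s : 'S_n.+1) (s ord0 == i))%N = n`!.
Proof.
have count_indep j : (\sum_(s : 'S_n.+1) (s ord0 == j))%N =
                     (\sum_(s : 'S_n.+1) (s ord0 == ord0))%N.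
  rewrite (reindex_inj (mulIg (tperm ord0 j))); apply: eq_bigr => s _.
  by rewrite permM -[X in _ == X](tpermL ord0 j) (inj_eq perm_inj).
have : (\sum_(j < n.+1) \sum_(s : 'S_n.+1) (s ord0 == j))%N = n.+1`!.
  rewrite exchange_big /= -card_Sn -sum1_card; apply: eq_bigr => s _.
  by rewrite (bigD1 (s ord0)) //= eqxx big1 // => j /negbTE; rewrite eq_sym => ->.
under eq_bigr do rewrite count_indep.
rewrite sum_nat_const card_ord factS count_indep => /eqP.
by rewrite eqn_mul2l => /eqP.
Qed.

Section Flatness.
Variables (R : realType) (T : countType) (P Q : T -> R).
Hypotheses (P_ge0 : forall t, 0 <= P t) (Q_ge0 : forall t, 0 <= Q t).
Hypothesis supp_PQ : forall t, 0 < P t -> 0 < Q t.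

Local Notation ratio t := (P t / Q t).

Lemma ratio_ge0 t : 0 <= ratio t.
Proof. by rewrite divr_ge0. Qed.

(* For [Q t = 0] the support hypothesis forces [P t = 0], so [x / 0 = 0] does no harm. *)
Lemma ratio_mulK t : ratio t * Q t = P t.
Proof.
have [Q_gt0|] := ltrP 0 (Q t); first by rewrite divfK ?gt_eqF.
move=> Q_le0; have Qt0 : Q t = 0 by apply/eqP; rewrite eq_le Q_le0 Q_ge0.
suff -> : P t = 0 by rewrite Qt0 mulr0.
apply/eqP; rewrite eq_le P_ge0 andbT leNgt.
by apply: contraTN isT => /supp_PQ; rewrite Qt0 ltxx.
Qed.

Variable n : nat.
Implicit Types (w : {ffun 'I_n.+1 -> T}) (i : 'I_n.+1).

Definition prodQ w := \prod_(j < n.+1) Q (w j).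

Lemma prodQ_ge0 w : 0 <= prodQ w.
Proof. exact: prodr_ge0. Qed.

Lemma shuffled_prod w i (s : 'S_n.+1) : s ord0 = i ->
  \prod_(j < n.+1) (if nat_of_ord j == 0%N then P (w (s j)) else Q (w (s j)))
  = P (w i) * \prod_(m < n.+1 | m != i) Q (w m).
Proof.
move=> s0i; pose F m := if m == i then P (w m) else Q (w m).
transitivity (\prod_(m < n.+1) F m).
  rewrite [RHS](reindex_inj (@perm_inj _ s)); apply: eq_bigr => j _.
  by rewrite /F -s0i (inj_eq perm_inj); case: (unliftP ord0 j) => [j' ->|->].
rewrite (bigD1 i) //= /F eqxx.
by congr (_ * _); apply: eq_bigr => m /negbTE ->.
Qed.

(* Exactly [(k-1)!] of the [k!] shuffles bring the password to position [i]. *)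
Lemma game_probE w i :
  game_prob P Q n.+1 w i = n.+1%:R^-1 * ratio (w i) * prodQ w.
Proof.
pose X := P (w i) * \prod_(m < n.+1 | m != i) Q (w m).
transitivity (\sum_(s : 'S_n.+1) (n.+1`!%:R)^-1 * (s ord0 == i)%:R * X).
  apply: eq_bigr => s _; have [s0i|s0i] := eqVneq (s ord0) i.
    have sVi : (s^-1)%g i = ord0 by rewrite -s0i permK.
    by rewrite sVi (shuffled_prod _ _ _ s0i).
  have -> : (nat_of_ord ((s^-1)%g i) == 0%N) = false.
    by apply/negbTE; apply: contra_neq s0i => /(@ord_inj n.+1 _ ord0) <-; rewrite permKV.
  by rewrite !mulr0 !mul0r.
rewrite -mulr_suml -mulr_sumr -natr_sum count_perm_ord0_eq factS natrM invfM.
rewrite divfK ?pnatr_eq0 -?lt0n ?fact_gt0 // -mulrA; congr (_ * _).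
by rewrite /prodQ (bigD1 i) //= mulrA ratio_mulK.
Qed.

Definition argmax_ratio w : 'I_n.+1 := [arg max_(i > ord0) ratio (w i)]%O.

Definition max_ratio w := ratio (w (argmax_ratio w)).

Lemma le_max_ratio w i : ratio (w i) <= max_ratio w.
Proof. by rewrite /max_ratio /argmax_ratio; case: arg_maxP => // j _; apply. Qed.

Lemma max_ratio_le w x : (max_ratio w <= x) <-> (forall i, ratio (w i) <= x).
Proof. by split=> [le_x i|]; [exact: le_trans (le_max_ratio w i) le_x|apply]. Qed.

Lemma max_ratio_lt w x : (max_ratio w < x) <-> (forall i, ratio (w i) < x).
Proof. by split=> [lt_x i|]; [exact: le_lt_trans (le_max_ratio w i) lt_x|apply]. Qed.

Definition best_attacker w i : R := (i == argmax_ratio w)%:R.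

Definition best_win w := n.+1%:R^-1 * max_ratio w * prodQ w.

Lemma best_win_ge0 w : 0 <= best_win w.
Proof. by rewrite !mulr_ge0 ?invr_ge0 ?ratio_ge0 ?prodQ_ge0. Qed.

Lemma win_le_best_win A w : is_attacker n.+1 A ->
  \sum_i A w i * game_prob P Q n.+1 w i <= best_win w.
Proof.
move=> /(_ w) [A_ge0 A_sum1]; rewrite -[best_win w]mul1r -A_sum1 mulr_suml.
apply: ler_sum => i _; rewrite game_probE ler_wpM2l // ler_wpM2r ?prodQ_ge0 //.
by rewrite ler_wpM2l ?invr_ge0 // le_max_ratio.
Qed.

Lemma best_attacker_is_attacker : is_attacker n.+1 best_attacker.
Proof.
move=> w; split=> [i|]; first by rewrite ler0n.
by rewrite (bigD1 (argmax_ratio w)) //= /best_attacker eqxx big1 ?addr0 // => j /negbTE ->.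
Qed.

Lemma best_attacker_win w :
  \sum_i best_attacker w i * game_prob P Q n.+1 w i = best_win w.
Proof.
rewrite (bigD1 (argmax_ratio w)) //= /best_attacker eqxx mul1r big1 ?addr0.
  by rewrite game_probE.
by move=> j /negbTE ->; rewrite mul0r.
Qed.

Hypothesis Q_sum1 : \esum_(t in [set: T]) (Q t)%:E = 1%E.

Lemma esum_Q_fin_num (S : set T) : \esum_(t in S) (Q t)%:E \is a fin_num.
Proof.
by apply: esum_fin_num_subset; [move=> t; rewrite lee_fin|rewrite Q_sum1].
Qed.

Lemma esum_prodQ_max_ratio_le x :
  \esum_(w in [set w | max_ratio w <= x]) (prodQ w)%:E = (Gle P Q x ^+ n.+1)%:E.
Proof.
have -> : [set w | max_ratio w <= x] =
          [set w | forall i, [set t | ratio t <= x] (w i)].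
  by apply/seteqP; split=> w /max_ratio_le.
by rewrite esum_prod_ffun ?esum_Q_fin_num // -(fineK (esum_Q_fin_num _)) -EFin_expe.
Qed.

Lemma esum_prodQ_max_ratio_lt x :
  \esum_(w in [set w | max_ratio w < x]) (prodQ w)%:E = (Glt P Q x ^+ n.+1)%:E.
Proof.
have -> : [set w | max_ratio w < x] =
          [set w | forall i, [set t | ratio t < x] (w i)].
  by apply/seteqP; split=> w /max_ratio_lt.
by rewrite esum_prod_ffun ?esum_Q_fin_num // -(fineK (esum_Q_fin_num _)) -EFin_expe.
Qed.

Lemma esum_prodQ_max_ratio_eq x :
  \esum_(w in max_ratio @^-1` [set x]) (prodQ w)%:E =
  (Gle P Q x ^+ n.+1 - Glt P Q x ^+ n.+1)%:E.
Proof.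
have := esumID [set w | max_ratio w < x] [set w | max_ratio w <= x]
  (fun w => (prodQ w)%:E) (fun w _ => prodQ_ge0 w).
have -> : [set w | max_ratio w <= x] `&` [set w | max_ratio w < x] =
          [set w | max_ratio w < x].
  by apply/seteqP; split=> w /= => [[]//|lt_x]; split=> //; exact: ltW.
have -> : [set w | max_ratio w <= x] `&` ~` [set w | max_ratio w < x] =
          max_ratio @^-1` [set x].
  apply/seteqP; split=> w /=; last by move=> ->; rewrite ltxx.
  by move=> [le_x /negP]; rewrite -leNgt => ge_x; apply/eqP; rewrite eq_le le_x.
rewrite esum_prodQ_max_ratio_le esum_prodQ_max_ratio_lt EFinB => ->.
by rewrite [_ + esum _ _]addeC addeK.
Qed.

(* A list containing a [Q]-null word has probability zero; otherwise its largest
   ratio is attained on the support of [Q]. *)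
Lemma best_win_eq0 w : ~ ratio_values P Q (max_ratio w) -> best_win w = 0.
Proof.
move=> not_value; have [j /eqP Q0|Q_neq0] := pickP (fun j => Q (w j) == 0).
  by rewrite /best_win /prodQ (bigD1 j) //= Q0 mul0r mulr0.
exfalso; apply: not_value; exists (w (argmax_ratio w)); split=> //.
by rewrite lt0r Q_neq0 Q_ge0.
Qed.

Lemma esum_best_win :
  \esum_(w in [set: {ffun 'I_n.+1 -> T}]) (best_win w)%:E = flatness_formula P Q n.+1.
Proof.
transitivity (\esum_(w in max_ratio @^-1` ratio_values P Q) (best_win w)%:E).
  rewrite [RHS]esum_mkcond; apply: eq_esum => w _.
  by case: ifPn => // /negP; rewrite inE => /best_win_eq0 ->.
rewrite esum_fibers; last by move=> w; rewrite lee_fin best_win_ge0.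
apply: eq_esum => _ [t [_ ->]].
under eq_esum => w /= wx do rewrite /best_win wx EFinM.
rewrite ge0_esumZl; last by rewrite mulr_ge0 ?invr_ge0 ?ratio_ge0.
  by rewrite esum_prodQ_max_ratio_eq -EFinM mulrA.
by move=> w; rewrite lee_fin prodQ_ge0.
Qed.

Lemma flatness_formula_is_flatness : is_flatness P Q n.+1 (flatness_formula P Q n.+1).
Proof.
rewrite -esum_best_win; split.
  exists best_attacker; split; first exact: best_attacker_is_attacker.
  by apply: eq_esum => w _; rewrite best_attacker_win.
move=> A A_attacker; apply: le_esum => w _.
by rewrite lee_fin win_le_best_win.
Qed.

End Flatness.

Theorem theorem3 (R : realType) (T : countType) (P Q : T -> R) (k : nat) :
  is_distr P -> is_distr Q ->
  (forall pw, 0 < P pw -> 0 < Q pw) ->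
  (2 <= k)%N ->
  is_flatness P Q k (flatness_formula P Q k).
Proof.
move=> [P_ge0 _] [Q_ge0 Q_sum1] supp_PQ; case: k => [//|n _].
exact: flatness_formula_is_flatness.
Qed.
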